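(* Let $T$ be the theory of the Rado graph in $\mathcal{L}=\{R\}$, $\mathcal{U}$ a monster model of $T$ and $M\prec\mathcal{U}$ a countable elementary substructure, and let $W$ be a Borel graphon. Then the function $\mu_W$ defined below is an $M$-invariant Keisler measure on $\mathcal{L}_x(\mathcal{U})$; moreover, $\mu_W$ does not concentrate on points (i.e. $\mu_W(x=a)=0$ for all $a\in\mathcal{U}$).
   Context: A graphon is a measurable symmetric $W\colon[0,1]^2\to[0,1]$; Borel if Borel measurable. $\mathfrak{m}$ is Lebesgue measure on $[0,1]$. $S^{*}_x(M)$ is the set of types in $S_x(M)$ not realized in $M$. $\lambda$ is the Keisler measure on $\mathcal{L}_x(\mathcal{U})$ with $\lambda(\bigwedge_{i\le n}R(x,a_i)\wedge\bigwedge_{j\le m}\neg R(x,b_j))=2^{-(n+m)}$ for distinct $a_i,b_j\in\mathcal{U}$; its restriction to $M$ is regarded as a Borel probability measure on $S^{*}_x(M)$. Fix an isomorphism of measure spaces $F\colon(S^{*}_x(M),\lambda)\to([0,1],\mathfrak{m})$ and write $W(p,q)=W(F(p),F(q))$ for $p,q\in S^{*}_x(M)$. A basic formula is $\varphi(x)=\bigwedge_{a\in A}R(x,a)\wedge\bigwedge_{b\in B}\neg R(x,b)\wedge\bigwedge_{c\in C}R(x,c)\wedge\bigwedge_{d\in D}\neg R(x,d)\wedge E(x)$ with $A,B\subseteq M$ finite disjoint, $C,D\subseteq\mathcal{U}\setminus M$ finite disjoint, and $E(x)$ a formula in the language of equality with parameters from $\mathcal{U}$; it is trivial if $E(x)$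 implies $x$ lies in a finite subset of $\mathcal{U}$. Define $\mu_W(\varphi)=0$ if $\varphi$ is trivial and otherwise $\mu_W(\varphi)=\int_{p\in S^{*}_x(M)}\mathbf{1}_{\psi_A\wedge\psi_B}(p)\prod_{c\in C}W(p,\operatorname{tp}(c/M))\prod_{d\in D}(1-W(p,\operatorname{tp}(d/M)))\,d\lambda$, where $\psi_A=\bigwedge_{a\in A}R(x,a)$, $\psi_B=\bigwedge_{b\in B}\neg R(x,b)$; $\mu_W$ is extended to arbitrary formulas by writing them (via quantifier elimination) as finite disjoint unions of basic formulas and adding. A Keisler measure on $\mathcal{L}_x(\mathcal{U})$ is a finitely additive probability measure on formulas modulo equivalence; it is $M$-invariant if $\mu(\varphi(x,\bar a))=\mu(\varphi(x,\bar b))$ for all $\mathcal{L}$-formulas $\varphi$ and $\bar a\equiv_M\bar b$. *)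

From HB Require Import structures.
From mathcomp Require Import all_boot all_order all_algebra.
From mathcomp Require Import all_classical all_reals all_analysis.
From Stdlib Require List.
Set Implicit Arguments. Unset Strict Implicit. Unset Printing Implicit Defensive.
Import Order.TTheory GRing.Theory Num.Theory.
Local Open Scope classical_set_scope.
Local Open Scope ring_scope.

(* Variables are named by natural numbers; the distinguished free variable *)
(* x is variable 0.  Parameters (constants) range over a type P.           *)

Inductive term (P : Type) := TVar of nat | TPar of P.
Arguments TVar {P}.
Arguments TPar {P}.

Inductive lform (P : Type) :=
| FRel of term P & term P
| FEq of term P & term P
| FFalse
| FNeg of lform P
| FAnd of lform P & lform P
| FEx of nat & lform P.
Arguments FFalse {P}.

Definition FTop {P} : lform P := FNeg FFalse.
Definition FOr {P} (f g : lform P) : lform P := FNeg (FAnd (FNeg f) (FNeg g)).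
Definition bigAnd {P} (l : list (lform P)) : lform P := foldr (@FAnd P) FTop l.

Definition vx {P} : term P := TVar 0.

Definition tmap P Q (f : P -> Q) (t : term P) : term Q :=
  match t with TVar n => TVar n | TPar p => TPar (f p) end.

Fixpoint fmap P Q (f : P -> Q) (phi : lform P) : lform Q :=
  match phi with
  | FRel t s => FRel (tmap f t) (tmap f s)
  | FEq t s => FEq (tmap f t) (tmap f s)
  | FFalse => FFalse
  | FNeg g => FNeg (fmap f g)
  | FAnd g h => FAnd (fmap f g) (fmap f h)
  | FEx n g => FEx n (fmap f g)
  end.

Definition tvar_is P (k : nat) (t : term P) : Prop :=
  match t with TVar n => n = k | TPar _ => False end.

Fixpoint free P (k : nat) (phi : lform P) : Prop :=
  match phi with
  | FRel t s | FEq t s => tvar_is k t \/ tvar_is k s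
  | FFalse => False
  | FNeg g => free k g
  | FAnd g h => free k g \/ free k h
  | FEx n g => n <> k /\ free k g
  end.

Definition onlyx P (phi : lform P) : Prop := forall k, free k phi -> k = 0%N.
Definition closed P (phi : lform P) : Prop := forall k, ~ free k phi.

Definition tpar_in P (A : set P) (t : term P) : Prop :=
  match t with TVar _ => True | TPar p => A p end.

Fixpoint params_in P (A : set P) (phi : lform P) : Prop :=
  match phi with
  | FRel t s | FEq t s => tpar_in A t /\ tpar_in A s
  | FFalse => True
  | FNeg g => params_in A g
  | FAnd g h => params_in A g /\ params_in A h
  | FEx _ g => params_in A g
  end.

Fixpoint no_rel P (phi : lform P) : Prop :=
  match phi with
  | FRel _ _ => False
  | FEq _ _ | FFalse => True
  | FNeg g => no_rel g
  | FAnd g h => no_rel g /\ no_rel h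
  | FEx _ g => no_rel g
  end.

(* Tarski semantics in an L-structure (U, Rel), quantifiers relativised  *)
(* to a domain D (D = setT for U itself, D = M for a substructure M).     *)
Section Semantics.
Variables (U : Type) (Rel : U -> U -> Prop).

Definition upd (v : nat -> U) (n : nat) (a : U) : nat -> U :=
  fun k => if k == n then a else v k.

Definition teval (v : nat -> U) (t : term U) : U :=
  match t with TVar n => v n | TPar a => a end.

Fixpoint sat_in (D : set U) (v : nat -> U) (phi : lform U) : Prop :=
  match phi with
  | FRel t s => Rel (teval v t) (teval v s)
  | FEq t s => teval v t = teval v s
  | FFalse => False
  | FNeg g => ~ sat_in D v g
  | FAnd g h => sat_in D v g /\ sat_in D v h
  | FEx n g => exists a, D a /\ sat_in D (upd v n a) g
  end.

Definition sat := sat_in setT.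

Definition realizes (c : U) (phi : lform U) : Prop := sat (fun _ => c) phi.

Definition defset (phi : lform U) : set U := [set c | realizes c phi].

(* U is a model of T = Th(Rado graph): symmetric, irreflexive, and the     *)
(* extension axioms (which axiomatise the complete theory T).              *)
Definition rado_model : Prop :=
  (forall a b, Rel a b -> Rel b a) /\
  (forall a, ~ Rel a a) /\
  (forall A B : list U, (forall a, List.In a A -> ~ List.In a B) ->
     exists c, ~ List.In c A /\ ~ List.In c B /\
       (forall a, List.In a A -> Rel c a) /\ (forall b, List.In b B -> ~ Rel c b)).

Definition elementary_sub (M : set U) : Prop :=
  forall (phi : lform U) (v : nat -> U), params_in M phi -> (forall k, M (v k)) ->
    (sat_in M v phi <-> sat v phi).

Definition fin_sat (S : set (lform U)) : Prop :=
  forall l : list (lform U), (forall phi, List.In phi l -> S phi) ->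
    exists c, forall phi, List.In phi l -> realizes c phi.

Definition small (A : set U) : Prop :=
  ~ exists f : {a : U | A a} -> U, forall u, exists y, f y = u.

Definition saturated : Prop :=
  forall (A : set U) (S : set (lform U)), small A ->
    (forall phi, S phi -> onlyx phi /\ params_in A phi) ->
    fin_sat S -> exists c, forall phi, S phi -> realizes c phi.

Variable M : set U.

Definition LxM (phi : lform U) : Prop := onlyx phi /\ params_in M phi.

Definition tp (c : U) : set (lform U) := [set phi | LxM phi /\ realizes c phi].

Definition is_type (p : set (lform U)) : Prop :=
  (forall phi, p phi -> LxM phi) /\
  (forall phi, LxM phi -> p phi \/ p (FNeg phi)) /\
  fin_sat p.

Definition realized_in_M (p : set (lform U)) : Prop := exists a, M a /\ p = tp a.

Definition Sstar : set (set (lform U)) := [set p | is_type p /\ ~ realized_in_M p].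

Definition clopen (phi : lform U) : set (set (lform U)) := [set p | Sstar p /\ p phi].

(* Borel sigma-algebra of S*_x(M): generated by the clopens [phi], phi in   *)
(* L_x(M) (viewed inside the ambient type of all sets of formulas; the     *)
(* complement of S*_x(M) is an atom of this sigma-algebra).                *)
Definition clopens : set (set (set (lform U))) := [set clopen phi | phi in LxM].

Definition TypeSpace : measurableType _ := g_sigma_algebraType clopens.

Definition SstarT : set TypeSpace := Sstar.
Definition clopenT (phi : lform U) : set TypeSpace := clopen phi.
Definition tpT (c : U) : TypeSpace := tp c.

End Semantics.
Arguments TypeSpace {U} Rel M.
Arguments SstarT {U} Rel M.
Arguments clopenT {U} Rel M phi.
Arguments tpT {U} Rel M c.
Arguments Sstar {U} Rel M.
Arguments clopen {U} Rel M phi.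
Arguments tp {U} Rel M c.

Definition Rx U (a : U) : lform U := FRel vx (TPar a).
Definition nRx U (a : U) : lform U := FNeg (FRel vx (TPar a)).

Section Measures.
Variables (R : realType) (U : Type) (Rel : U -> U -> Prop) (M : set U).
Local Notation TS := (TypeSpace Rel M).

Definition is_lambda (lam : {measure set TS -> \bar R}) : Prop :=
  lam (~` SstarT Rel M) = 0%E /\
  forall A B : list U, List.NoDup A -> List.NoDup B -> (forall a, List.In a A -> ~ List.In a B) ->
    (forall a, List.In a A -> M a) -> (forall b, List.In b B -> M b) ->
    lam (clopenT Rel M (bigAnd (map (@Rx U) A ++ map (@nRx U) B)))
      = ((2%:R ^-1) ^+ (size A + size B))%:E.

(* F : (S*_x(M), lambda) -> ([0,1], Lebesgue) is an isomorphism of measure  *)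
(* spaces: a bijection, measurable with measurable inverse, and measure     *)
(* preserving.  (F is given on all sets of formulas; only its values on     *)
(* S*_x(M) matter.)                                                         *)
Definition measure_iso (lam : {measure set TS -> \bar R}) (F : TS -> R) : Prop :=
  (forall p, SstarT Rel M p -> `[0, 1]%classic (F p)) /\
  {in SstarT Rel M &, injective F} /\
  (forall r, `[0, 1]%classic r -> exists2 p, SstarT Rel M p & F p = r) /\
  measurable_fun (SstarT Rel M) F /\
  (forall A : set TS, measurable A -> A `<=` SstarT Rel M ->
     measurable (F @` A)) /\
  (forall B : set R, measurable B ->
     lam (SstarT Rel M `&` F @^-1` B) = lebesgue_measure (B `&` `[0, 1]%classic)).

Definition borel_graphon (W : R -> R -> R) : Prop :=
  (forall s t, `[0, 1]%classic s -> `[0, 1]%classic t -> W s t = W t s) /\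
  (forall s t, `[0, 1]%classic s -> `[0, 1]%classic t -> 0 <= W s t <= 1) /\
  measurable_fun (`[0, 1]%classic `*` `[0, 1]%classic : set (R * R)) (fun st : R * R => W st.1 st.2).

End Measures.

Section Keisler.
Variables (R : realType) (U : Type) (Rel : U -> U -> Prop).

Definition keisler_measure (mu : lform U -> R) : Prop :=
  (forall phi psi, onlyx phi -> onlyx psi ->
     defset Rel phi = defset Rel psi -> mu phi = mu psi) /\
  (forall phi, onlyx phi -> 0 <= mu phi) /\
  mu FTop = 1 /\
  (forall phi psi, onlyx phi -> onlyx psi ->
     defset Rel phi `&` defset Rel psi = set0 ->
     mu (FOr phi psi) = mu phi + mu psi).

(* instantiation of the placeholders y_i of an L-formula phi(x, y) *)
Definition inst n (a : 'I_n -> U) : U + 'I_n -> U :=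
  fun s => match s with inl u => u | inr i => a i end.

Definition in_M_or_var n (M : set U) : set (U + 'I_n) :=
  fun s => match s with inl u => M u | inr _ => True end.

Definition same_type_over n (M : set U) (a b : 'I_n -> U) : Prop :=
  forall (psi : lform (U + 'I_n)) (v : nat -> U),
    closed psi -> params_in (@in_M_or_var n M) psi ->
    (sat Rel v (fmap (inst a) psi) <-> sat Rel v (fmap (inst b) psi)).

(* M-invariance; L-formulas phi(x, y_0..y_{n-1}) are formulas whose only    *)
(* parameters are the placeholders y_i : 'I_n, and only free variable x.   *)
Definition M_invariant (M : set U) (mu : lform U -> R) : Prop :=
  forall n (phi : lform 'I_n) (a b : 'I_n -> U), onlyx phi ->
    same_type_over M a b -> mu (fmap a phi) = mu (fmap b phi).

End Keisler.

Definition basic U (A B C D : list U) (E : lform U) : lform U :=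
  bigAnd (map (@Rx U) A ++ map (@nRx U) B ++ map (@Rx U) C ++ map (@nRx U) D ++ [:: E]).

Definition basic_data U (M : set U) (A B C D : list U) (E : lform U) : Prop :=
  List.NoDup A /\ List.NoDup B /\ (forall a, List.In a A -> ~ List.In a B) /\
  (forall a, List.In a A -> M a) /\ (forall b, List.In b B -> M b) /\
  List.NoDup C /\ List.NoDup D /\ (forall c, List.In c C -> ~ List.In c D) /\
  (forall c, List.In c C -> ~ M c) /\ (forall d, List.In d D -> ~ M d) /\
  no_rel E /\ onlyx E.

Definition trivial_eq U (Rel : U -> U -> Prop) (E : lform U) : Prop :=
  exists S : list U, forall c, realizes Rel c E -> List.In c S.

Definition muW_basic (R : realType) U (Rel : U -> U -> Prop) (M : set U)
  (lam : {measure set (TypeSpace Rel M) -> \bar R}) (F : TypeSpace Rel M -> R)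
  (W : R -> R -> R) (A B C D : list U) (E : lform U) : \bar R :=
  if `[< trivial_eq Rel E >] then 0%E else
  (\int[lam]_(p in SstarT Rel M)
     (\1_(clopenT Rel M (bigAnd (map (@Rx U) A ++ map (@nRx U) B))) p
      * \prod_(c <- C) W (F p) (F (tpT Rel M c))
      * \prod_(d <- D) (1 - W (F p) (F (tpT Rel M d))))%:E)%E.

(* For a formula phi(x) with parameter list P, decide R(x,e) for the parameters
   e of P one at a time: for e in M as the type p in S*_x(M) says, and for e
   outside M with probability W(p, tp(e/M)).  Each outcome is a cell (the points
   outside P with a prescribed R-pattern over P); by a back-and-forth argument
   from the extension axioms, phi(U) minus P is a union of cells.  The mass of
   phi at p is the probability of ending in a cell inside phi(U), and mu_W(phi)
   is its lambda-integral.  A redundant parameter splits a cell into two pieces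
   of total weight one, so the mass depends only on phi(U); it is additive,
   vanishes on finite sets, is the product of the edge weights on a basic
   formula, and is unchanged when the parameters are replaced by a tuple of the
   same type over M. *)

From Pilot Require Import Defs.
From HB Require Import structures.
From mathcomp Require Import all_boot all_order all_algebra.
From mathcomp Require Import all_classical all_reals all_analysis.
From mathcomp Require Import ring lra.
From Stdlib Require List Permutation.
(* Re-imported so that [fmap] and [closed] refer to formulas, not filters. *)
From Pilot Require Import Defs.
Set Implicit Arguments. Unset Strict Implicit. Unset Printing Implicit Defensive.
Import Order.TTheory GRing.Theory Num.Theory.
Local Open Scope classical_set_scope.
Local Open Scope ring_scope.

Lemma In_cat (T : Type) (x : T) (s1 s2 : seq T) :
  List.In x (s1 ++ s2) <-> List.In x s1 \/ List.In x s2.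
Proof. exact: List.in_app_iff. Qed.

Lemma In_map (T T' : Type) (f : T -> T') (y : T') (s : seq T) :
  List.In y (map f s) <-> exists x, List.In x s /\ f x = y.
Proof. by rewrite -[map f s]/(List.map f s) List.in_map_iff; split=> -[x []]; exists x. Qed.

Lemma In_filter (T : Type) (p : pred T) (x : T) (s : seq T) :
  List.In x (seq.filter p s) <-> List.In x s /\ p x.
Proof. exact: List.filter_In. Qed.

Lemma allIn_cat (T : Type) (Q : T -> Prop) (s1 s2 : seq T) :
  (forall x, List.In x (s1 ++ s2) -> Q x) <->
  (forall x, List.In x s1 -> Q x) /\ (forall x, List.In x s2 -> Q x).
Proof.
split=> [H|[H1 H2] x /In_cat [/H1|/H2] //].
by split=> x xs; apply: H; apply/In_cat; [left|right].
Qed.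

Lemma allIn_map (T T' : Type) (f : T -> T') (Q : T' -> Prop) (s : seq T) :
  (forall y, List.In y (map f s) -> Q y) <-> (forall x, List.In x s -> Q (f x)).
Proof.
split=> [H x xs|H y /In_map [x [xs <-]]]; last exact: H.
by apply: H; apply/In_map; exists x.
Qed.

Lemma NoDup_cat (T : Type) (s1 s2 : seq T) : List.NoDup s1 -> List.NoDup s2 ->
  (forall x, List.In x s1 -> ~ List.In x s2) -> List.NoDup (s1 ++ s2).
Proof. exact: List.NoDup_app. Qed.

Section BigProdIn.
Variables (R : realType) (T : Type).

Lemma eq_bigprod_In (s : seq T) (f g : T -> R) :
  (forall x, List.In x s -> f x = g x) -> \prod_(x <- s) f x = \prod_(x <- s) g x.
Proof.
elim: s => [|x s IH] H; first by rewrite !big_nil.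
by rewrite !big_cons H ?IH //; [move=> y ys; apply: H; right | left].
Qed.

Lemma bigprod_indicator (s : seq T) (P : T -> Prop) :
  \prod_(x <- s) (if `[< P x >] then 1 else 0 : R) =
  if `[< forall x, List.In x s -> P x >] then 1 else 0.
Proof.
elim: s => [|x s IH]; first by rewrite big_nil asboolT.
rewrite big_cons IH; have [Px|nPx] := pselect (P x).
- have -> : (forall y, List.In y (x :: s) -> P y) = (forall y, List.In y s -> P y).
    by apply/propext; split=> H y ys; [apply: H; right | case: ys => [<-|]; auto].
  by rewrite (asboolT Px) mul1r.
- by rewrite (asboolF nPx) mul0r asboolF // => H; apply: nPx; apply: H; left.
Qed.

End BigProdIn.

Definition tparams {P} (t : term P) : seq P :=
  match t with TVar _ => [::] | TPar p => [:: p] end.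

Fixpoint params {P} (phi : lform P) : seq P :=
  match phi with
  | FRel t s | FEq t s => tparams t ++ tparams s
  | FFalse => [::]
  | FNeg g => params g
  | FAnd g h => params g ++ params h
  | FEx _ g => params g
  end.

Lemma params_fmap P Q (f : P -> Q) phi : params (fmap f phi) = map f (params phi).
Proof.
by elim: phi => [[?|?] [?|?]|[?|?] [?|?]||a /= ->|a /= -> b ->|n a /= ->] //=;
  rewrite map_cat.
Qed.

Lemma params_bigAnd_cat U (l1 l2 : seq (lform U)) :
  params (bigAnd (l1 ++ l2)) = params (bigAnd l1) ++ params (bigAnd l2).
Proof. by elim: l1 => [|phi l IH] //=; rewrite IH catA. Qed.

Lemma params_bigAnd_Rx U (A : seq U) : params (bigAnd (map (@Rx U) A)) = A.
Proof. by elim: A => [|a A IH] //=; rewrite IH. Qed.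

Lemma params_bigAnd_nRx U (A : seq U) : params (bigAnd (map (@nRx U) A)) = A.
Proof. by elim: A => [|a A IH] //=; rewrite IH. Qed.

Lemma params_in_sub P (A B : set P) phi :
  A `<=` B -> params_in A phi -> params_in B phi.
Proof.
move=> AB; elim: phi => [[?|?] [?|?]|[?|?] [?|?]||//|g Hg h Hh|//] /=;
  by [firstorder | case; split; auto].
Qed.

Lemma params_in_params P (phi : lform P) :
  params_in (fun q => List.In q (params phi)) phi.
Proof.
elim: phi => [[?|?] [?|?]|[?|?] [?|?]||//|g Hg h Hh|//] /=;
  rewrite ?In_cat /=; try tauto.
split.
- by apply: params_in_sub Hg => q; rewrite In_cat; left.
- by apply: params_in_sub Hh => q; rewrite In_cat; right.
Qed.

Lemma params_in_fmap P Q (f : P -> Q) (A : set Q) phi :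
  params_in A (fmap f phi) <-> params_in (fun q => A (f q)) phi.
Proof.
elim: phi => [[?|?] [?|?]|[?|?] [?|?]||g IH|g IHg h IHh|n g IH] //=.
by rewrite IHg IHh.
Qed.

Lemma free_fmap P Q (f : P -> Q) k phi : free k (fmap f phi) <-> free k phi.
Proof.
elim: phi => [[?|?] [?|?]|[?|?] [?|?]||g IH|g IHg h IHh|n g IH] //=.
- by rewrite IHg IHh.
- by rewrite IH.
Qed.

Lemma fmap_comp P Q S (f : P -> Q) (g : Q -> S) phi :
  fmap g (fmap f phi) = fmap (g \o f) phi.
Proof.
by elim: phi => [[?|?] [?|?]|[?|?] [?|?]||a /= ->|a /= -> b ->|n a /= ->].
Qed.

Lemma eq_fmap P Q (f g : P -> Q) : f =1 g -> fmap f =1 fmap g.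
Proof.
move=> fg; elim=> [[?|?] [?|?]|[?|?] [?|?]||a /= ->|a /= -> b ->|n a /= ->] //=;
  by rewrite ?fg.
Qed.

Lemma fmap_id P (phi : lform P) : fmap id phi = phi.
Proof.
by elim: phi => [[?|?] [?|?]|[?|?] [?|?]||a /= ->|a /= -> b ->|n a /= ->].
Qed.

Section Satisfaction.
Variables (U : Type) (Rel : U -> U -> Prop).

Lemma sat_eq_free (phi : lform U) v v' :
  (forall k, free k phi -> v k = v' k) -> (sat Rel v phi <-> sat Rel v' phi).
Proof.
rewrite /sat; elim: phi v v' => /=.
- by case=> [n|a] [m|b] v v' H /=; rewrite ?H //=; auto.
- by case=> [n|a] [m|b] v v' H /=; rewrite ?H //=; auto.
- by [].
- by move=> g IH v v' H; rewrite (IH v v').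
- by move=> g Ig h Ih v v' H; rewrite (Ig v v') ?(Ih v v'); auto.
- have upd_eq n g v v' a : (forall k, free k (FEx n g) -> v k = v' k) ->
      forall k, free k g -> upd v n a k = upd v' n a k.
    move=> H k fk; rewrite /upd; case: eqP => // /eqP kn.
    by apply: H; split=> //; apply/eqP; rewrite eq_sym.
  move=> n g IH v v' H; split=> -[a [_ Ha]]; exists a; split=> //.
  + by apply/(IH (upd v n a)) => //; apply: upd_eq.
  + by apply/(IH _ (upd v' n a)) => //; apply: upd_eq.
Qed.

Lemma sat_onlyx (phi : lform U) v :
  onlyx phi -> (sat Rel v phi <-> realizes Rel (v 0%N) phi).
Proof. by move=> ox; apply: sat_eq_free => k /ox ->. Qed.

Lemma sat_bigAnd v (l : seq (lform U)) :
  sat Rel v (bigAnd l) <-> forall phi, List.In phi l -> sat Rel v phi.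
Proof.
rewrite /sat; elim: l => [|phi l IH] /=; first by split=> // _ [].
rewrite IH; split=> [[H1 H2] psi [<-|]|H]; auto.
Qed.

End Satisfaction.

Section BackAndForth.
Variables (U : Type) (Rel : U -> U -> Prop).
Hypothesis hT : rado_model Rel.
Let hsym : forall a b, Rel a b -> Rel b a := hT.1.
Let hirr : forall a, ~ Rel a a := hT.2.1.
Let hext := hT.2.2.

(* With [with_rel = false] only equalities are matched, enough for [no_rel] formulas. *)
Variables (Par : Type) (pars : seq Par) (with_rel : bool).

Definition tev (j : Par -> U) (v : nat -> U) (t : term Par) : U :=
  match t with TVar n => v n | TPar q => j q end.

Definition relevant (V : seq nat) (t : term Par) : Prop :=
  match t with TVar n => List.In n V | TPar q => List.In q pars end.

Definition partial_iso j j' V v v' := forall t s, relevant V t -> relevant V s ->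
  (tev j v t = tev j v s <-> tev j' v' t = tev j' v' s) /\
  (with_rel -> (Rel (tev j v t) (tev j v s) <-> Rel (tev j' v' t) (tev j' v' s))).

Lemma partial_iso_sym {j j' V v v'} : partial_iso j j' V v v' -> partial_iso j' j V v' v.
Proof.
move=> C t s Ht Hs; have [C1 C2] := C t s Ht Hs; split; first by rewrite C1.
by move=> wr; rewrite C2.
Qed.

Definition old_terms n V : seq (term Par) :=
  map (fun k => TVar k) (seq.filter (fun k => k != n) V) ++ map (fun q => TPar q) pars.

Lemma old_termsP n V t : List.In t (old_terms n V) <-> relevant V t /\ t <> TVar n.
Proof.
rewrite /old_terms In_cat !In_map; split.
- case=> [[k [/In_filter [kV kn] <-]]|[q [qP <-]]] //=; split=> // -[] kn'.
  by rewrite kn' eqxx in kn.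
- case: t => [k|q] /= [H1 H2]; [left|right]; last by exists q.
  by exists k; split=> //; apply/In_filter; split=> //; apply/eqP => kn; apply: H2; rewrite kn.
Qed.

Lemma relevant_cons n V t : relevant (n :: V) t -> t = TVar n \/ List.In t (old_terms n V).
Proof.
case: t => [k|q] /=; last by move=> qP; right; apply/old_termsP.
case=> [->|kV]; first by left.
have [->|kn] := eqVneq k n; first by left.
by right; apply/old_termsP; split=> // -[] /eqP; rewrite (negbTE kn).
Qed.

Lemma tev_upd_old j v n a {V t} :
  List.In t (old_terms n V) -> tev j (upd v n a) t = tev j v t.
Proof.
move/old_termsP=> [_]; case: t => //= k kn; rewrite /upd; case: eqP => // e.
by case: kn; rewrite e.
Qed.

Definition extends_iso j j' n V v v' (a a' : U) := forall s, List.In s (old_terms n V) ->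
  (a = tev j v s <-> a' = tev j' v' s) /\
  (with_rel -> (Rel a (tev j v s) <-> Rel a' (tev j' v' s))).

Lemma partial_iso_upd j j' n V v v' a a' : partial_iso j j' V v v' ->
  extends_iso j j' n V v v' a a' -> partial_iso j j' (n :: V) (upd v n a) (upd v' n a').
Proof.
move=> C G t s /relevant_cons Ht /relevant_cons Hs.
have old_rel u : List.In u (old_terms n V) -> relevant V u by case/old_termsP.
case: Ht => [->|Ht]; case: Hs => [->|Hs].
- by rewrite /= /upd eqxx; split=> // _; split=> /hirr.
- by rewrite !(tev_upd_old _ _ _ Hs) /= /upd eqxx; exact: G.
- rewrite !(tev_upd_old _ _ _ Ht) /= /upd eqxx.
  have [G1 G2] := G t Ht; split; first by split=> /esym/G1/esym.
  by move=> wr; split=> /hsym/(G2 wr)/hsym.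
- rewrite !(tev_upd_old _ _ _ Ht) !(tev_upd_old _ _ _ Hs).
  exact: C (old_rel _ Ht) (old_rel _ Hs).
Qed.

(* The new point is either equal to an old one, or realises the required
   pattern over the old points by an extension axiom. *)
Lemma extends_iso_exists {j j' V v v'} n a : partial_iso j j' V v v' ->
  exists a', extends_iso j j' n V v v' a a'.
Proof.
move=> C.
have old_rel t : List.In t (old_terms n V) -> relevant V t by case/old_termsP.
have [[t0 [Ht0 <-]]|nE] :=
    pselect (exists t0, List.In t0 (old_terms n V) /\ tev j v t0 = a).
  exists (tev j' v' t0) => s Hs.
  by have [C1 C2] := C t0 s (old_rel _ Ht0) (old_rel _ Hs).
pose pos := fun t => `[< with_rel /\ Rel a (tev j v t) >].
pose A' := map (tev j' v') (seq.filter pos (old_terms n V)).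
pose B' := map (tev j' v') (seq.filter (predC pos) (old_terms n V)).
have dAB : forall x, List.In x A' -> ~ List.In x B'.
  move=> x /In_map [t1 [/In_filter [H1 p1] <-]] /In_map [t2 [/In_filter [H2 p2] e]].
  have [C1 _] := C t1 t2 (old_rel _ H1) (old_rel _ H2).
  by move/esym: e => /C1 e; move: p2; rewrite /= /pos -e -/(pos t1) p1.
have [a' [nA [nB [RA RB]]]] := hext dAB.
exists a' => s Hs; split.
- split=> e; first by case: nE; exists s.
  case Hp: (pos s); [case: nA | case: nB];
    by apply/In_map; exists s; split=> //; apply/In_filter; rewrite /= Hp.
- move=> wr; split=> H.
  + apply: RA; apply/In_map; exists s; split=> //; apply/In_filter; split=> //.
    exact/asboolP.
  + case Hp: (pos s); first by move: Hp => /asboolP [].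
    by case: (RB (tev j' v' s)) => //; apply/In_map; exists s; split=> //;
      apply/In_filter; rewrite /= Hp.
Qed.

Lemma partial_iso_extend {j j' V v v'} n a : partial_iso j j' V v v' ->
  exists a', partial_iso j j' (n :: V) (upd v n a) (upd v' n a').
Proof.
move=> C; have [a' G] := extends_iso_exists n a C.
by exists a'; apply: partial_iso_upd.
Qed.

Lemma sat_partial_iso j j' (phi : lform Par) V v v' :
  (forall k, free k phi -> List.In k V) ->
  params_in (fun q => List.In q pars) phi ->
  (with_rel = false -> no_rel phi) ->
  partial_iso j j' V v v' ->
  (sat Rel v (fmap j phi) <-> sat Rel v' (fmap j' phi)).
Proof.
have tevE j0 v0 (t : term Par) : teval v0 (tmap j0 t) = tev j0 v0 t by case: t.
rewrite /sat; elim: phi V v v' => /=.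
- move=> t s V v v' Hf [Pt1 Pt2] Hr C; rewrite !tevE.
  have wr : with_rel by case: with_rel Hr => // /(_ erefl).
  have Ht : relevant V t by case: t Hf Pt1 => //= k Hf _; apply: Hf; left.
  have Hs : relevant V s by case: s Hf Pt2 => //= k Hf _; apply: Hf; right.
  exact: (C t s Ht Hs).2 wr.
- move=> t s V v v' Hf [Pt1 Pt2] Hr C; rewrite !tevE.
  have Ht : relevant V t by case: t Hf Pt1 => //= k Hf _; apply: Hf; left.
  have Hs : relevant V s by case: s Hf Pt2 => //= k Hf _; apply: Hf; right.
  exact: (C t s Ht Hs).1.
- by [].
- by move=> g IH V v v' Hf Hp Hr C; rewrite (IH V v v').
- move=> g Ig h Ih V v v' Hf [Hp1 Hp2] Hr C.
  have Hfg k : free k g -> List.In k V by move=> fk; apply: Hf; left.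
  have Hfh k : free k h -> List.In k V by move=> fk; apply: Hf; right.
  have Hrg : with_rel = false -> no_rel g by move=> /Hr [].
  have Hrh : with_rel = false -> no_rel h by move=> /Hr [].
  by rewrite (Ig V v v' Hfg Hp1 Hrg C) (Ih V v v' Hfh Hp2 Hrh C).
- move=> n g IH V v v' Hf Hp Hr C.
  have Hf' k : free k g -> List.In k (n :: V).
    move=> fk; have [->|kn] := eqVneq n k; first by left.
    by right; apply: Hf; split=> //; apply/eqP.
  split=> -[a [_ Ha]].
  + have [a' C'] := partial_iso_extend n a C.
    by exists a'; split=> //; apply/(IH (n :: V) (upd v n a) (upd v' n a')).
  + have [a' C'] := partial_iso_extend n a (partial_iso_sym C).
    exists a'; split=> //; apply/(IH (n :: V) (upd v n a') (upd v' n a)) => //.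
    exact: partial_iso_sym.
Qed.

End BackAndForth.

Section Patterns.
Variables (U : Type) (Rel : U -> U -> Prop).

Definition pattern_closed (S X : set U) := forall c c', ~ S c -> ~ S c' ->
  (forall s, S s -> (Rel c s <-> Rel c' s)) -> X c -> X c'.

Lemma pattern_closedS (S S' X : set U) :
  S `<=` S' -> pattern_closed S X -> pattern_closed S' X.
Proof.
move=> SS' H c c' nc nc' pat; apply: H; [by move/SS'|by move/SS'|].
by move=> s /SS'; apply: pat.
Qed.

Definition disj (T N : seq U) := forall x, List.In x T -> ~ List.In x N.

Definition cell (T N : seq U) : set U :=
  [set c | ~ List.In c T /\ ~ List.In c N /\
    (forall t, List.In t T -> Rel c t) /\ (forall n, List.In n N -> ~ Rel c n)].

Lemma cell_consT x T N : cell (x :: T) N `<=` cell T N.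
Proof.
move=> c [c1 [c2 [c3 c4]]]; split; [|split; [|split]] => //= [?|t tT].
- by apply: c1; right.
- by apply: c3; right.
Qed.

Lemma cell_consN x T N : cell T (x :: N) `<=` cell T N.
Proof.
move=> c [c1 [c2 [c3 c4]]]; split; [|split; [|split]] => //= [?|n nN].
- by apply: c2; right.
- by apply: c4; right.
Qed.

Hypothesis hT : rado_model Rel.
Let hsym : forall a b, Rel a b -> Rel b a := hT.1.
Let hirr : forall a, ~ Rel a a := hT.2.1.
Let hext := hT.2.2.

Lemma cell_fresh T N (L : seq U) : disj T N -> exists c, cell T N c /\ ~ List.In c L.
Proof.
move=> dTN.
pose B' := N ++ seq.filter (fun x => ~~ `[< List.In x T >]) L.
have dB : forall x, List.In x T -> ~ List.In x B'.
  move=> x xT /In_cat [/(dTN _ xT)//|/In_filter [_]].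
  by move/asboolPn.
have [c [nT [nB [RT RB]]]] := hext dB.
have nN : ~ List.In c N by move=> cN; apply: nB; apply/In_cat; left.
exists c; split.
  by do 3?split=> //; move=> n nN'; apply: RB; apply/In_cat; left.
move=> cL; apply: nB; apply/In_cat; right; apply/In_filter; split=> //.
exact/asboolPn.
Qed.

Lemma partial_iso_fresh (with_rel : bool) (P : seq U) c c' :
  ~ List.In c P -> ~ List.In c' P ->
  (with_rel -> forall s, List.In s P -> (Rel c s <-> Rel c' s)) ->
  partial_iso Rel P with_rel id id [:: 0%N] (fun _ => c) (fun _ => c').
Proof.
move=> nc nc' pat [k|q] [l|q'] /= Ht Hs.
- by split=> // _; split=> /hirr.
- split; first by split=> e; [case: nc|case: nc']; rewrite e.
  by move=> wr; apply: pat.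
- split; first by split=> e; [case: nc|case: nc']; rewrite -e.
  by move=> wr; split=> /hsym/(pat wr q Ht) /hsym.
- by split.
Qed.

Lemma defset_pattern_closed phi : onlyx phi ->
  pattern_closed (fun s => List.In s (params phi)) (defset Rel phi).
Proof.
move=> ox c c' nc nc' pat.
have fx k : free k phi -> List.In k [:: 0%N] by move/ox ->; left.
have C := partial_iso_fresh (with_rel:=true) nc nc' (fun _ => pat).
have := sat_partial_iso hT fx (params_in_params phi)
  (fun e => False_ind _ (Bool.diff_true_false e)) C.
by rewrite !fmap_id => H /H.
Qed.

Lemma no_rel_realizes_fresh E c c' : no_rel E -> onlyx E ->
  ~ List.In c (params E) -> ~ List.In c' (params E) ->
  realizes Rel c E -> realizes Rel c' E.
Proof.
move=> nr ox nc nc'.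
have fx k : free k E -> List.In k [:: 0%N] by move/ox ->; left.
have C := partial_iso_fresh (with_rel:=false) nc nc' (fun wr => False_ind _ (notF wr)).
have := sat_partial_iso hT fx (params_in_params E) (fun _ => nr) C.
by rewrite !fmap_id => H /H.
Qed.

End Patterns.

Section TypesOverM.
Variables (U : Type) (Rel : U -> U -> Prop) (M : set U).

Lemma LxM_and phi psi : LxM M phi -> LxM M psi -> LxM M (FAnd phi psi).
Proof. by move=> [h1 h2] [h3 h4]; split=> // k /= [/h1|/h3]. Qed.

Lemma LxM_top : LxM M (@FTop U).
Proof. by split=> // k. Qed.

Lemma LxM_bigAnd (l : seq (lform U)) : (forall phi, List.In phi l -> LxM M phi) ->
  LxM M (bigAnd l).
Proof.
elim: l => [|phi l IH] H /=; first exact: LxM_top.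
by apply: LxM_and; [apply: H; left | apply: IH => psi ?; apply: H; right].
Qed.

Lemma LxM_Rx a : M a -> LxM M (Rx a).
Proof. by move=> Ma; split=> [k /= [<-|[]]|]. Qed.

Lemma LxM_nRx a : M a -> LxM M (nRx a).
Proof. by move=> Ma; split=> [k /= [<-|[]]|]. Qed.

Lemma LxM_eq a : M a -> LxM M (FEq vx (TPar a)).
Proof. by move=> Ma; split=> [k /= [<-|[]]|]. Qed.

Variable p : set (lform U).
Hypothesis hp : is_type Rel M p.

Lemma type_neg phi : LxM M phi -> (p (FNeg phi) <-> ~ p phi).
Proof.
move: hp => [_ [hcomp hfin]] Lphi; split; last by case: (hcomp _ Lphi).
move=> pn pp; have [c Hc] := hfin [:: phi; FNeg phi] ltac:(by move=> psi /= [<-|[<-|[]]]).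
by apply: (Hc (FNeg phi)); [right; left | apply: Hc; left].
Qed.

Lemma type_and phi psi : LxM M phi -> LxM M psi -> (p (FAnd phi psi) <-> p phi /\ p psi).
Proof.
move: hp => [_ [hcomp hfin]] L1 L2.
have contra chi : LxM M chi -> (realizes Rel^~ (FAnd phi psi) `<=` realizes Rel^~ chi) ->
    p (FAnd phi psi) -> p chi.
  move=> Lchi sub pa; have [//|pn] := hcomp _ Lchi.
  have [c Hc] := hfin [:: FAnd phi psi; FNeg chi] ltac:(by move=> x /= [<-|[<-|[]]]).
  by case: (Hc (FNeg chi)); [right; left | apply: sub; apply: Hc; left].
split=> [pa|[p1 p2]].
  by split; apply: contra pa => // c [].
have [//|pn] := hcomp _ (LxM_and L1 L2).
have [c Hc] := hfin [:: phi; psi; FNeg (FAnd phi psi)]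
  ltac:(by move=> x /= [<-|[<-|[<-|[]]]]).
by case: (Hc _ (or_intror (or_intror (or_introl erefl)))); split; apply: Hc; [left|right; left].
Qed.

Lemma type_top : p FTop.
Proof.
move: hp => [_ [hcomp hfin]]; have [//|pn] := hcomp _ LxM_top.
have [c Hc] := hfin [:: FNeg FTop] ltac:(by move=> x /= [<-|[]]).
by case: (Hc _ (or_introl erefl)) => -[].
Qed.

Lemma type_bigAnd (l : seq (lform U)) : (forall phi, List.In phi l -> LxM M phi) ->
  (p (bigAnd l) <-> forall phi, List.In phi l -> p phi).
Proof.
elim: l => [|phi l IH] H /=; first by split=> // _; exact: type_top.
have Hl psi : List.In psi l -> LxM M psi by move=> ?; apply: H; right.
rewrite type_and ?IH //; [|by apply: H; left | exact: LxM_bigAnd].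
by split=> [[? ?] psi [<-|]|]; auto.
Qed.

End TypesOverM.

Lemma tp_Sstar U (Rel : U -> U -> Prop) (M : set U) e : ~ M e -> Sstar Rel M (tp Rel M e).
Proof.
move=> nMe; split.
- split; first by move=> phi [].
  split; last by move=> l Hl; exists e => phi /Hl [].
  move=> phi Lphi; have [H|H] := pselect (realizes Rel e phi); first by left.
  by right; split.
- move=> [a [Ma E]].
  have : tp Rel M a (FEq vx (TPar a)) by split; [exact: LxM_eq|].
  rewrite -E => -[_ ea]; apply: nMe.
  by rewrite /realizes /sat /= in ea; rewrite ea.
Qed.

Section SubstituteX.
Variables (U : Type) (n : nat) (i : 'I_n).

Definition subst_x_term (t : term U) : term (U + 'I_n) :=
  match t with
  | TVar 0 => TPar (inr i)
  | TVar k => TVar k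
  | TPar u => TPar (inl u)
  end.

(* An occurrence of x bound by an inner [FEx 0] is left alone. *)
Fixpoint subst_x (phi : lform U) : lform (U + 'I_n) :=
  match phi with
  | FRel t s => FRel (subst_x_term t) (subst_x_term s)
  | FEq t s => FEq (subst_x_term t) (subst_x_term s)
  | FFalse => FFalse
  | FNeg g => FNeg (subst_x g)
  | FAnd g h => FAnd (subst_x g) (subst_x h)
  | FEx k g => if k == 0%N then FEx k (fmap inl g) else FEx k (subst_x g)
  end.

Lemma sat_subst_x Rel (a : 'I_n -> U) (phi : lform U) v :
  sat Rel v (fmap (inst a) (subst_x phi)) <-> sat Rel (upd v 0 (a i)) phi.
Proof.
rewrite /sat; elim: phi v => /=.
- by move=> t s v; case: t => [[|k]|u]; case: s => [[|l]|w].
- by move=> t s v; case: t => [[|k]|u]; case: s => [[|l]|w].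
- by [].
- by move=> g IH v; rewrite IH.
- by move=> g Ig h Ih v; rewrite Ig Ih.
- move=> k g IH v; case: eqP => [->|kn] /=.
  + rewrite fmap_comp (@eq_fmap _ _ _ id) // fmap_id.
    have E d : upd (upd v 0 (a i)) 0 d = upd v 0 d.
      by apply/funext => z; rewrite /upd; case: eqP.
    by split=> -[d [_ Hd]]; exists d; rewrite ?E // -E.
  + have E d : upd (upd v k d) 0 (a i) = upd (upd v 0 (a i)) k d.
      apply/funext => z; rewrite /upd; case: eqP => [->|z0]; case: eqP => // zk.
      by case: kn; rewrite -zk.
    by split=> -[d [_ Hd]]; exists d; split=> //; [rewrite -E; apply/IH | apply/IH; rewrite E].
Qed.

Lemma free_subst_x k (phi : lform U) : free k (subst_x phi) -> k <> 0%N /\ free k phi.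
Proof.
elim: phi => /=.
- by case=> [[|k']|u] [[|l]|w] /=; intuition (subst; discriminate).
- by case=> [[|k']|u] [[|l]|w] /=; intuition (subst; discriminate).
- by [].
- by [].
- by move=> g Ig h Ih [/Ig|/Ih]; tauto.
- move=> k' g IH; case: eqP => [->|kn] /= [nk fk]; last by have [? ?] := IH fk.
  by rewrite free_fmap in fk; split=> // e; apply: nk; rewrite e.
Qed.

Lemma params_subst_x (M : set U) (phi : lform U) : params_in M phi ->
  params_in (@in_M_or_var U n M) (subst_x phi).
Proof.
elim: phi => /=.
- by case=> [[|k']|u] [[|l]|w].
- by case=> [[|k']|u] [[|l]|w].
- by [].
- by [].
- by move=> g Ig h Ih [? ?]; split; auto.
- move=> k g IH Hp; case: eqP => _ /=; last exact: IH.
  by rewrite params_in_fmap.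
Qed.

End SubstituteX.

Section SameType.
Variables (U : Type) (Rel : U -> U -> Prop) (M : set U) (n : nat).

Lemma same_type_over_sym (a b : 'I_n -> U) :
  same_type_over Rel M a b -> same_type_over Rel M b a.
Proof. by move=> hst psi v cl pM; symmetry; apply: hst. Qed.

Lemma tp_sub_same_type (a b : 'I_n -> U) i :
  same_type_over Rel M a b -> tp Rel M (a i) `<=` tp Rel M (b i).
Proof.
move=> hst phi [[ox pM] re]; split=> //.
have cl : closed (subst_x i phi) by move=> k /free_subst_x [k0 /ox].
have := hst _ (fun _ => a i) cl (params_subst_x i pM).
by rewrite !sat_subst_x !sat_onlyx // /upd /= => <-.
Qed.

Lemma tp_same_type (a b : 'I_n -> U) i :
  same_type_over Rel M a b -> tp Rel M (a i) = tp Rel M (b i).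
Proof.
move=> hst; apply/seteqP; split; apply: tp_sub_same_type => //.
exact: same_type_over_sym.
Qed.

End SameType.

Definition mix (R : realType) (m t : bool) (w x y : R) : R :=
  if m then (if t then x else y) else w * x + (1 - w) * y.

Lemma mix_swap (R : realType) m1 t1 w1 m2 t2 w2 (x1 x2 y1 y2 : R) :
  mix m1 t1 w1 (mix m2 t2 w2 x1 x2) (mix m2 t2 w2 y1 y2) =
  mix m2 t2 w2 (mix m1 t1 w1 x1 y1) (mix m1 t1 w1 x2 y2).
Proof. by case: m1; case: m2; case: t1; case: t2; rewrite /mix; ring. Qed.

Lemma mix_same (R : realType) m t w (x : R) : mix m t w x x = x.
Proof. by case: m; case: t; rewrite /mix //; ring. Qed.

Lemma mix_bounds (R : realType) m t w (x y : R) : (~~ m -> 0 <= w <= 1) ->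
  0 <= x <= 1 -> 0 <= y <= 1 -> 0 <= mix m t w x y <= 1.
Proof.
case: m; rewrite /mix; first by case: t.
move=> /(_ isT) /andP [w0 w1] /andP [x0 x1] /andP [y0 y1].
by apply/andP; split; nra.
Qed.

Definition decided U (T N : seq U) (e : U) : Prop := List.In e T \/ List.In e N.

Lemma disj_consT U x (T N : seq U) : ~ decided T N x -> disj T N -> disj (x :: T) N.
Proof. by move=> nx dTN y /= [<- yN|/dTN]; [apply: nx; right|]. Qed.

Lemma disj_consN U x (T N : seq U) : ~ decided T N x -> disj T N -> disj T (x :: N).
Proof. by move=> nx dTN y yT /= [ey|/(dTN _ yT)//]; apply: nx; left; rewrite ey. Qed.

Section Mass.
Variables (R : realType) (U : Type) (Rel : U -> U -> Prop) (M : set U).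
Variables (F : TypeSpace Rel M -> R) (W : R -> R -> R).

Definition edge_weight (p : TypeSpace Rel M) (e : U) : R := W (F p) (F (tpT Rel M e)).

(* Starting from the cell of [R(x,t)] (t in T) and [~ R(x,n)] (n in N), decide
   [R(x,e)] for the parameters e of P in turn -- by the type p if e is in M,
   and with probability [W(p, tp(e/M))] otherwise -- and return the probability
   of ending in a cell included in X. *)
Fixpoint mass (P : seq U) (X : set U) (T N : seq U) (p : TypeSpace Rel M) : R :=
  match P with
  | [::] => if `[< cell Rel T N `<=` X >] then 1 else 0
  | e :: P' => if `[< decided T N e >] then mass P' X T N p
      else mix `[< M e >] `[< p (Rx e) >] (edge_weight p e)
             (mass P' X (e :: T) N p) (mass P' X T (e :: N) p)
  end.

Lemma eq_mass P X p T N T' N' :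
  (forall x, List.In x T <-> List.In x T') -> (forall x, List.In x N <-> List.In x N') ->
  mass P X T N p = mass P X T' N' p.
Proof.
elim: P T N T' N' => [|e P IH] T N T' N' HT HN /=.
  have -> // : cell Rel T N = cell Rel T' N'.
  by rewrite /cell; apply/seteqP; split=> c /=; firstorder.
have -> : decided T N e = decided T' N' e by apply/propext; rewrite /decided HT HN.
case: ifP => _; first exact: IH.
by congr mix; apply: IH => //= x; rewrite ?HT ?HN.
Qed.

Lemma mass_swap e1 e2 P X T N p :
  mass [:: e1, e2 & P] X T N p = mass [:: e2, e1 & P] X T N p.
Proof.
have dT (x y : U) T0 N0 : decided T0 N0 y -> decided (x :: T0) N0 y.
  by rewrite /decided /=; tauto.
have dN (x y : U) T0 N0 : decided T0 N0 y -> decided T0 (x :: N0) y.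
  by rewrite /decided /=; tauto.
have nT (x y : U) T0 N0 : x <> y -> ~ decided T0 N0 y -> ~ decided (x :: T0) N0 y.
  by rewrite /decided /=; tauto.
have nN (x y : U) T0 N0 : x <> y -> ~ decided T0 N0 y -> ~ decided T0 (x :: N0) y.
  by rewrite /decided /=; tauto.
rewrite /=; have [d1|d1] := pselect (decided T N e1);
  have [d2|d2] := pselect (decided T N e2).
- by rewrite !asboolT.
- by rewrite (asboolT d1) (asboolF d2) (asboolT (dT e2 _ _ _ d1)) (asboolT (dN e2 _ _ _ d1)).
- by rewrite (asboolF d1) (asboolT d2) (asboolT (dT e1 _ _ _ d2)) (asboolT (dN e1 _ _ _ d2)).
have [<-|ne] := pselect (e1 = e2); first by rewrite (asboolF d1).
have ne' : e2 <> e1 by move=> /esym.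
rewrite (asboolF d1) (asboolF d2) (asboolF (nT _ _ _ _ ne d2)) (asboolF (nN _ _ _ _ ne d2)).
rewrite (asboolF (nT _ _ _ _ ne' d1)) (asboolF (nN _ _ _ _ ne' d1)) mix_swap.
by congr mix; congr mix; apply: eq_mass => x /=; tauto.
Qed.

Lemma mass_perm P P' X p T N : Permutation.Permutation P P' ->
  mass P X T N p = mass P' X T N p.
Proof.
move=> perm; elim: perm T N => [|x l l' _ IH|x y l|l l' l'' _ IH1 _ IH2] T N //.
- by rewrite /= !IH.
- exact: mass_swap.
- by rewrite IH1 IH2.
Qed.

Lemma mass_agree X X' P p T N :
  (forall c, ~ decided T N c -> ~ List.In c P -> (X c <-> X' c)) ->
  mass P X T N p = mass P X' T N p.
Proof.
elim: P T N => [|e P IH] T N HX /=.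
  have -> // : (cell Rel T N `<=` X) = (cell Rel T N `<=` X').
  by apply/propext; split=> H c [c1 [c2 c3]]; apply/(HX c) => //; [case|apply: H|case|apply: H].
case: ifP => [/asboolP de|/asboolP de].
  by apply: IH => c nd nP; apply: HX => // -[ec|//]; apply: nd; rewrite -ec.
congr mix; apply: IH => c nd nP; apply: HX => [|/= [ec|//]];
  by move: nd; rewrite /decided /=; tauto.
Qed.

Lemma mass_bounds P X p : (forall e, ~ M e -> 0 <= edge_weight p e <= 1) ->
  forall T N, 0 <= mass P X T N p <= 1.
Proof.
move=> Hw; elim: P => [|e P IH] T N /=; first by case: ifP; rewrite ?ler01 ?lexx.
case: ifP => _ //; apply: mix_bounds => // nm; apply: Hw => Me.
by move: nm; rewrite asboolT.
Qed.

Hypothesis hT : rado_model Rel.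

Lemma pattern_closed_cell (S X : set U) T N c c' : pattern_closed Rel S X ->
  (forall s, S s -> decided T N s) -> cell Rel T N c -> cell Rel T N c' -> X c -> X c'.
Proof.
move=> sX SD [c1 [c2 [c3 c4]]] [d1 [d2 [d3 d4]]]; apply: sX; try by move=> /SD [].
move=> s /SD [sT|sN]; split=> H; by [apply: d3 | apply: c3 | case: (c4 _ sN) | case: (d4 _ sN)].
Qed.

Lemma pattern_closed_cell_sub (S X : set U) T N T' N' : pattern_closed Rel S X ->
  (forall s, S s -> decided T N s) -> disj T' N' -> cell Rel T' N' `<=` cell Rel T N ->
  (cell Rel T' N' `<=` X) = (cell Rel T N `<=` X).
Proof.
move=> sX SD d' sub; apply/propext; split=> [H c cc|H c /sub /H //].
have [c0 [cc0 _]] := cell_fresh hT [::] d'.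
exact: pattern_closed_cell sX SD (sub _ cc0) cc (H _ cc0).
Qed.

Lemma mass_decided (S X : set U) P p T N : pattern_closed Rel S X ->
  (forall s, S s -> decided T N s) -> disj T N ->
  mass P X T N p = (if `[< cell Rel T N `<=` X >] then 1 else 0).
Proof.
move=> sX; elim: P T N => [|e P IH] T N SD dTN //=.
case: ifP => [/asboolP de|/asboolP de]; first exact: IH.
have SDT s : S s -> decided (e :: T) N s by move=> /SD; rewrite /decided /=; tauto.
have SDN s : S s -> decided T (e :: N) s by move=> /SD; rewrite /decided /=; tauto.
rewrite (IH _ _ SDT (disj_consT de dTN)) (IH _ _ SDN (disj_consN de dTN)).
rewrite (pattern_closed_cell_sub sX SD (disj_consT de dTN) (@cell_consT _ _ e T N)).
rewrite (pattern_closed_cell_sub sX SD (disj_consN de dTN) (@cell_consN _ _ e T N)).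
exact: mix_same.
Qed.

Lemma mass_cat (S X : set U) P Q p T N : pattern_closed Rel S X ->
  (forall s, S s -> decided T N s \/ List.In s P) -> disj T N ->
  mass (P ++ Q) X T N p = mass P X T N p.
Proof.
move=> sX; elim: P T N => [|e P IH] T N SD dTN.
  by rewrite /= (mass_decided Q p sX) // => s /SD [|[]].
rewrite /=; case: ifP => [/asboolP de|/asboolP de].
  by apply: IH => // s /SD [|[<-|]]; tauto.
have SDT s : S s -> decided (e :: T) N s \/ List.In s P.
  by move=> /SD; rewrite /decided /=; tauto.
have SDN s : S s -> decided T (e :: N) s \/ List.In s P.
  by move=> /SD; rewrite /decided /=; tauto.
by congr mix; [apply: IH SDT (disj_consT de dTN) | apply: IH SDN (disj_consN de dTN)].
Qed.

Lemma mass_setU (S X Y : set U) P p T N :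
  pattern_closed Rel S X -> pattern_closed Rel S Y -> X `&` Y = set0 ->
  (forall s, S s -> decided T N s \/ List.In s P) -> disj T N ->
  mass P (X `|` Y) T N p = mass P X T N p + mass P Y T N p.
Proof.
move=> sX sY dXY; elim: P T N => [|e P IH] T N SD dTN /=.
  have SD' s : S s -> decided T N s by move=> /SD [|[]].
  have [c0 [cc0 _]] := cell_fresh hT [::] dTN.
  have inX Z : pattern_closed Rel S Z -> Z c0 -> cell Rel T N `<=` Z.
    by move=> sZ Zc0 c cc; exact: pattern_closed_cell sZ SD' cc0 cc Zc0.
  have notin Z : ~ Z c0 -> ~ cell Rel T N `<=` Z by move=> nZ /(_ _ cc0).
  have [Xc0|nXc0] := pselect (X c0).
    have nYc0 : ~ Y c0 by move=> Yc0; have : (X `&` Y) c0 by []; rewrite dXY.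
    have sXc := inX _ sX Xc0.
    rewrite (asboolT sXc) (asboolT (subset_trans sXc (@subsetUl _ X Y))).
    by rewrite (asboolF (notin _ nYc0)) addr0.
  have [Yc0|nYc0] := pselect (Y c0).
    have sYc := inX _ sY Yc0.
    rewrite (asboolT sYc) (asboolT (subset_trans sYc (@subsetUr _ X Y))).
    by rewrite (asboolF (notin _ nXc0)) add0r.
  have nXYc0 : ~ (X `|` Y) c0 by case.
  by rewrite (asboolF (notin _ nXc0)) (asboolF (notin _ nYc0)) (asboolF (notin _ nXYc0)) addr0.
case: ifP => [/asboolP de|/asboolP de].
  by apply: IH => // s /SD [|[<-|]]; tauto.
have SDT s : S s -> decided (e :: T) N s \/ List.In s P.
  by move=> /SD; rewrite /decided /=; tauto.
have SDN s : S s -> decided T (e :: N) s \/ List.In s P.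
  by move=> /SD; rewrite /decided /=; tauto.
rewrite (IH _ _ SDT (disj_consT de dTN)) (IH _ _ SDN (disj_consN de dTN)).
by rewrite /mix; case: ifP => _; [case: ifP|ring].
Qed.

Lemma mass_eq0 X (L : seq U) P p T N : disj T N ->
  (forall c, cell Rel T N c -> X c -> List.In c L) -> mass P X T N p = 0.
Proof.
elim: P T N => [|e P IH] T N dTN HX /=.
  have [c0 [cc0 nL]] := cell_fresh hT L dTN.
  by rewrite asboolF // => sub; apply/nL/HX/sub.
case: ifP => [/asboolP de|/asboolP de]; first exact: IH.
rewrite (IH (e :: T) N (disj_consT de dTN)) ?(IH T (e :: N) (disj_consN de dTN)) ?mix_same //.
- by move=> c cc; apply: HX; apply: cell_consN cc.
- by move=> c cc; apply: HX; apply: cell_consT cc.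
Qed.

Definition pattern_set (g : U -> bool) (K : seq U) : set U :=
  [set c | forall e, List.In e K -> (Rel c e <-> g e)].

Definition pattern_factor (g : U -> bool) p e : R :=
  if `[< M e >] then (if `[< p (Rx e) >] == g e then 1 else 0)
  else (if g e then edge_weight p e else 1 - edge_weight p e).

Lemma mass_pattern_set (g : U -> bool) (K Q : seq U) p T N : List.NoDup Q ->
  (forall e, List.In e Q -> ~ decided T N e) ->
  (forall e, List.In e Q -> List.In e K) ->
  (forall e, List.In e K -> decided T N e \/ List.In e Q) ->
  (forall t, List.In t T -> g t) -> (forall n, List.In n N -> ~~ g n) ->
  disj T N -> mass Q (pattern_set g K) T N p = \prod_(e <- Q) pattern_factor g p e.
Proof.
elim: Q T N => [|e Q IH] T N nd hQ QK KD gT gN dTN.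
  rewrite big_nil /= asboolT // => c [c1 [c2 [c3 c4]]] e eK.
  case: (KD e eK) => [[eT|eN]|[]]; first by split=> _; [exact: gT | exact: c3].
  by split=> [/(c4 _ eN)//|ge]; move: (gN _ eN); rewrite ge.
move: nd => /List.NoDup_cons_iff [eQ nd].
have de := hQ e (or_introl erefl).
have eK := QK e (or_introl erefl).
have hQ' T' N' : (forall x, List.In x Q -> decided T' N' x -> decided T N x) ->
    forall x, List.In x Q -> ~ decided T' N' x.
  by move=> HT x xQ H; apply: (hQ x); [right | exact: HT x xQ H].
have QK' x : List.In x Q -> List.In x K by move=> xQ; apply: QK; right.
rewrite /= big_cons (asboolF de).
(* Only the branch agreeing with [g e] can end in a cell inside [pattern_set g K]. *)
case ge : (g e).
- have -> : mass Q (pattern_set g K) T (e :: N) p = 0.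
    apply: (mass_eq0 (L := [::])); first exact: disj_consN.
    by move=> c [_ [_ [_ c4]]] Xc; apply: (c4 e); [left | apply/(Xc e eK); rewrite ge].
  rewrite (IH (e :: T) N) //; last exact: disj_consT.
  + by rewrite /mix /pattern_factor ge; case: `[< M e >]; case: `[< p (Rx e) >] => /=; ring.
  + by apply: hQ' => x xQ [/= [ex|xT]|xN]; [case: eQ; rewrite ex | left | right].
  + move=> x /KD [[xT|xN]|[ex|xQ]]; by [left; left; right | left; right
      | left; left; left | right].
  + by move=> t /= [<-|/gT]; rewrite ?ge.
- have -> : mass Q (pattern_set g K) (e :: T) N p = 0.
    apply: (mass_eq0 (L := [::])); first exact: disj_consT.
    move=> c [_ [_ [c3 _]]] Xc; move: (proj1 (Xc e eK) (c3 e (or_introl erefl))).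
    by rewrite ge.
  rewrite (IH T (e :: N)) //; last exact: disj_consN.
  + by rewrite /mix /pattern_factor ge; case: `[< M e >]; case: `[< p (Rx e) >] => /=; ring.
  + by apply: hQ' => x xQ [xT|/= [ex|xN]]; [left | case: eQ; rewrite ex | right].
  + move=> x /KD [[xT|xN]|[ex|xQ]]; by [left; left | left; right; right
      | left; right; left | right].
  + by move=> t /= [<-|/gN]; rewrite ?ge.
Qed.

End Mass.

Section Transfer.
Variables (U : Type) (Rel : U -> U -> Prop).
Hypothesis hT : rado_model Rel.
Let hsym : forall a b, Rel a b -> Rel b a := hT.1.
Let hirr : forall a, ~ Rel a a := hT.2.1.

Lemma In_map_transfer n (a b : 'I_n -> U) (I : seq 'I_n) i :
  (forall i j, a i = a j <-> b i = b j) ->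
  List.In (a i) (map a I) -> List.In (b i) (map b I).
Proof.
move=> eab /In_map [x [xI e]]; apply/In_map; exists x; split=> //.
exact/eab.
Qed.

Lemma defset_cell_transfer n (a b : 'I_n -> U) (phi : lform 'I_n) (I J : seq 'I_n) c c' :
  onlyx phi ->
  (forall i j, a i = a j <-> b i = b j) ->
  (forall i j, Rel (a i) (a j) <-> Rel (b i) (b j)) ->
  (forall i, List.In i (params phi) -> exists j, List.In j (I ++ J) /\ a i = a j) ->
  cell Rel (map a I) (map a J) c -> cell Rel (map b I) (map b J) c' ->
  defset Rel (fmap a phi) c -> defset Rel (fmap b phi) c'.
Proof.
move=> ox eab rab inv [c1 [c2 [c3 c4]]] [d1 [d2 [d3 d4]]].
have inI (f : 'I_n -> U) j : List.In j I -> List.In (f j) (map f I).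
  by move=> jI; apply/In_map; exists j.
have inJ (f : 'I_n -> U) j : List.In j J -> List.In (f j) (map f J).
  by move=> jJ; apply/In_map; exists j.
have key j : List.In j (params phi) ->
    (c = a j <-> c' = b j) /\ (Rel c (a j) <-> Rel c' (b j)).
  move=> /inv [j' [jIJ e]]; have e' : b j = b j' by apply/eab.
  rewrite e e'; case/In_cat: jIJ => H.
  - split; last by split=> _; [apply: d3 | apply: c3]; apply: inI.
    by split=> ee; exfalso; [apply: c1 | apply: d1]; rewrite ee; apply: inI.
  - split; last by split=> [/(c4 _ (inJ a _ H))|/(d4 _ (inJ b _ H))].
    by split=> ee; exfalso; [apply: c2 | apply: d2]; rewrite ee; apply: inJ.
have C : partial_iso Rel (params phi) true a b [:: 0%N] (fun _ => c) (fun _ => c').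
  move=> [k|i] [l|j] /= Ht Hs.
  - by split=> // _; split=> /hirr.
  - by have [k1 k2] := key j Hs; split=> // _.
  - have [k1 k2] := key i Ht; split; first by split=> /esym/k1/esym.
    by move=> _; split=> /hsym/k2/hsym.
  - by split=> // _; exact: rab.
have fx k : free k phi -> List.In k [:: 0%N] by move/ox ->; left.
have := sat_partial_iso hT fx (params_in_params phi)
  (fun e => False_ind _ (Bool.diff_true_false e)) C.
by move=> H /H.
Qed.

Variables (R : realType) (M : set U) (F : TypeSpace Rel M -> R) (W : R -> R -> R).
Variables (n : nat) (a b : 'I_n -> U).
Hypotheses (eab : forall i j, a i = a j <-> b i = b j)
  (rab : forall i j, Rel (a i) (a j) <-> Rel (b i) (b j))
  (Mab : forall i, M (a i) -> b i = a i) (Mba : forall i, M (b i) -> a i = b i)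
  (tpab : forall i, tpT Rel M (a i) = tpT Rel M (b i)).

Let eba i j : b i = b j <-> a i = a j. Proof. by rewrite eab. Qed.
Let rba i j : Rel (b i) (b j) <-> Rel (a i) (a j). Proof. by rewrite rab. Qed.

Lemma cell_sub_transfer (phi : lform 'I_n) (I J : seq 'I_n) : onlyx phi ->
  (forall i, List.In i (params phi) -> exists j, List.In j (I ++ J) /\ a i = a j) ->
  disj (map a I) (map a J) -> disj (map b I) (map b J) ->
  (cell Rel (map a I) (map a J) `<=` defset Rel (fmap a phi)) =
  (cell Rel (map b I) (map b J) `<=` defset Rel (fmap b phi)).
Proof.
move=> ox inv da db.
have invb i : List.In i (params phi) -> exists j, List.In j (I ++ J) /\ b i = b j.
  by move=> /inv [j [jIJ e]]; exists j; split=> //; apply/eab.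
apply/propext; split=> H c' cc'.
- have [c0 [cc0 _]] := cell_fresh hT [::] da.
  exact: (defset_cell_transfer ox eab rab inv cc0 cc' (H _ cc0)).
- have [c0 [cc0 _]] := cell_fresh hT [::] db.
  exact: (defset_cell_transfer ox eba rba invb cc0 cc' (H _ cc0)).
Qed.

Lemma decided_transfer (I J : seq 'I_n) i :
  decided (map a I) (map a J) (a i) = decided (map b I) (map b J) (b i).
Proof.
by apply/propext; rewrite /decided; split=> -[H|H];
  [left|right|left|right]; apply: In_map_transfer H.
Qed.

Lemma mass_transfer (phi : lform 'I_n) p (Q I J : seq 'I_n) : onlyx phi ->
  (forall i, List.In i (params phi) ->
     List.In i Q \/ exists j, List.In j (I ++ J) /\ a i = a j) ->
  disj (map a I) (map a J) -> disj (map b I) (map b J) ->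
  mass F W (map a Q) (defset Rel (fmap a phi)) (map a I) (map a J) p =
  mass F W (map b Q) (defset Rel (fmap b phi)) (map b I) (map b J) p.
Proof.
move=> ox; elim: Q I J => [|i Q IH] I J inv da db /=.
  by rewrite (cell_sub_transfer ox) // => i /inv [[]|].
rewrite -decided_transfer; case: ifP => [/asboolP d|/asboolP d].
  apply: IH => // i' /inv [/= [<-|iQ]|]; [|by left|by right].
  by right; case: d => /In_map [x [xIJ <-]]; exists x; split=> //;
    apply/In_cat; [left|right].
have d' : ~ decided (map b I) (map b J) (b i) by rewrite -decided_transfer.
have -> : `[< M (a i) >] = `[< M (b i) >].
  by apply: (congr1 asbool); apply/propext; split=> [Ma|Mb];
    [rewrite (Mab Ma) | rewrite (Mba Mb)].
rewrite (IH (i :: I) J) ?(IH I (i :: J)) //; try solve [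
  exact: (disj_consN d') | exact: (disj_consN d) |
  exact: (disj_consT d') | exact: (disj_consT d)].
- have [Mb|Mb] := pselect (M (b i)).
  + by rewrite (asboolT Mb) /mix (Mba Mb).
  + by rewrite (asboolF Mb) /mix /edge_weight (tpab i).
- move=> i' /inv [/= [<-|iQ]|[j [jIJ e]]]; [|by left|].
  + by right; exists i; split=> //; apply/In_cat; right; left.
  + right; exists j; split=> //; apply/In_cat.
    by case/In_cat: jIJ => H; [left | right; right].
- move=> i' /inv [/= [<-|iQ]|[j [jIJ e]]]; [|by left|].
  + by right; exists i; split=> //; left.
  + by right; exists j; split=> //; right.
Qed.

End Transfer.

Lemma defset_basic U (Rel : U -> U -> Prop) A B C D E c :
  defset Rel (basic A B C D E) c <->
  [/\ (forall a, List.In a A -> Rel c a), (forall b, List.In b B -> ~ Rel c b),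
      (forall x, List.In x C -> Rel c x), (forall d, List.In d D -> ~ Rel c d) &
      realizes Rel c E].
Proof.
rewrite /defset /realizes /= /basic sat_bigAnd !allIn_cat !allIn_map /sat /=.
split=> [[H1 [H2 [H3 [H4 H5]]]]|[H1 H2 H3 H4 H5]]; first by split=> //; apply: H5; left.
by do 4!split=> //; move=> x [<-|[]].
Qed.

Lemma params_basic U A B C D (E : lform U) :
  params (basic A B C D E) = (A ++ B ++ C ++ D) ++ params E ++ [::].
Proof.
rewrite /basic !params_bigAnd_cat !params_bigAnd_Rx !params_bigAnd_nRx /=.
by rewrite -!catA.
Qed.

Lemma no_rel_realizes_cofinite U (Rel : U -> U -> Prop) (E : lform U) :
  rado_model Rel -> no_rel E -> onlyx E -> ~ trivial_eq Rel E ->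
  forall c, ~ List.In c (params E) -> realizes Rel c E.
Proof.
move=> hT nrE oxE ntr c nc.
have [c0 [Ec0 nc0]] : exists c0, realizes Rel c0 E /\ ~ List.In c0 (params E).
  apply: contrapT => H; apply: ntr; exists (params E) => c' Ec'.
  by apply: contrapT => nc'; apply: H; exists c'.
exact: (no_rel_realizes_fresh hT nrE oxE nc0 nc Ec0).
Qed.

Section ClopenIndicator.
Variables (R : realType) (U : Type) (Rel : U -> U -> Prop) (M : set U).

Lemma clopen_literals_indicator (A B : seq U) p :
  (forall a, List.In a A -> M a) -> (forall b, List.In b B -> M b) -> SstarT Rel M p ->
  \1_(clopenT Rel M (bigAnd (map (@Rx U) A ++ map (@nRx U) B))) p =
  (if `[< forall a, List.In a A -> p (Rx a) >] then 1 else 0) *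
  (if `[< forall b, List.In b B -> ~ p (Rx b) >] then 1 else 0) :> R.
Proof.
move=> MA MB Sp; have hp := Sp.1.
have LAB phi : List.In phi (map (@Rx U) A ++ map (@nRx U) B) -> LxM M phi.
  by case/In_cat=> /In_map [x [xAB <-]]; [apply: LxM_Rx; apply: MA | apply: LxM_nRx; apply: MB].
have clo : clopenT Rel M (bigAnd (map (@Rx U) A ++ map (@nRx U) B)) p <->
    (forall a, List.In a A -> p (Rx a)) /\ (forall b, List.In b B -> ~ p (Rx b)).
  rewrite /clopenT /clopen /= (type_bigAnd hp LAB) allIn_cat !allIn_map.
  split=> [[_ [HA HB]]|[HA HB]].
  - by split=> // b bB; apply/(type_neg hp (LxM_Rx (MB b bB))); exact: HB.
  - by split=> //; split=> // b bB; apply/(type_neg hp (LxM_Rx (MB b bB))); exact: HB.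
rewrite indicE.
have [HA|HA] := pselect (forall a, List.In a A -> p (Rx a));
have [HB|HB] := pselect (forall b, List.In b B -> ~ p (Rx b)).
- by rewrite (asboolT HA) (asboolT HB) mem_set ?mulr1 //; apply/clo.
- by rewrite (asboolT HA) (asboolF HB) memNset ?mulr0 // => /clo [].
- by rewrite (asboolF HA) (asboolT HB) memNset ?mulr0 ?mul0r // => /clo [].
- by rewrite (asboolF HA) (asboolF HB) memNset ?mulr0 // => /clo [].
Qed.

End ClopenIndicator.

Section MuW.
Variables (R : realType) (U : Type) (Rel : U -> U -> Prop) (M : set U).
Variables (lam : {measure set (TypeSpace Rel M) -> \bar R}) (F : TypeSpace Rel M -> R).
Variable W : R -> R -> R.
Hypotheses (hT : rado_model Rel) (hlam : is_lambda lam) (hF : measure_iso lam F)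
  (hW : borel_graphon W).

Local Notation S := (SstarT Rel M).
Local Notation mass := (mass F W).

Lemma measurable_clopen phi : LxM M phi -> measurable (clopenT Rel M phi).
Proof. by move=> L; apply: sub_sigma_algebra; exists phi. Qed.

Lemma SstarE : S = clopenT Rel M FTop.
Proof.
apply/seteqP; split=> p /=; last by case.
by move=> Sp; split=> //; exact: type_top Sp.1.
Qed.

Lemma measurable_Sstar : measurable S.
Proof. by rewrite SstarE; apply: measurable_clopen; exact: LxM_top. Qed.

Lemma lambda_Sstar : lam S = 1%E.
Proof.
have := hlam.2 [::] [::] (List.NoDup_nil _) (List.NoDup_nil _) (fun _ x => match x with end)
  (fun _ x => match x with end) (fun _ x => match x with end).
by rewrite /= expr0 -SstarE.
Qed.

Lemma edge_weight_bounds p e : S p -> ~ M e -> 0 <= edge_weight F W p e <= 1.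
Proof. by move=> Sp nMe; apply: hW.2.1; apply: hF.1; last exact: tp_Sstar. Qed.

Lemma measurable_edge_weight e : ~ M e -> measurable_fun S (edge_weight F W ^~ e).
Proof.
move=> nMe; rewrite /edge_weight; set r := F (tpT Rel M e).
have r01 : `[0, 1]%classic r := hF.1 _ (tp_Sstar Rel nMe).
have mI : measurable (`[0, 1]%classic `*` `[0, 1]%classic : set (R * R)).
  by apply: measurableX; apply: measurable_itv.
have := hW.2.2; rewrite (measurable_restrictT _ mI) => mWt.
have mWr := measurableT_comp (measurable_fun_pair1 r mWt) hF.2.2.2.1.
apply: eq_measurable_fun mWr => p; rewrite inE => Sp /=.
by rewrite patchT // inE; split=> //; exact: hF.1.
Qed.

Lemma measurable_mass P X T N : measurable_fun S (mass P X T N).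
Proof.
elim: P T N => [|e P IH] T N /=; first exact: measurable_cst.
have [de|de] := pselect (decided T N e); first by rewrite (asboolT de); exact: IH.
rewrite (asboolF de) /mix; have [Me|Me] := pselect (M e).
- rewrite (asboolT Me); apply: (measurable_fun_if measurable_Sstar).
  + apply: (measurable_fun_bool true).
    rewrite (_ : _ `&` _ = clopenT Rel M (Rx e)); first exact: measurable_clopen (LxM_Rx Me).
    by apply/seteqP; split=> p /= [Sp H]; split=> //; apply/asboolP.
  + exact: measurable_funS measurable_Sstar (@subIsetl _ _ _) (IH _ _).
  + exact: measurable_funS measurable_Sstar (@subIsetl _ _ _) (IH _ _).
- rewrite (asboolF Me); apply: measurable_realfun.measurable_funD;
    apply: measurable_realfun.measurable_funM => //.
  + exact: measurable_edge_weight.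
  + apply: measurable_realfun.measurable_funB; first exact: measurable_cst.
    exact: measurable_edge_weight.
Qed.

Lemma mass_Sstar_bounds P X T N p : S p -> 0 <= mass P X T N p <= 1.
Proof. by move=> Sp; apply: mass_bounds => e; apply: edge_weight_bounds. Qed.

Definition fmass (phi : lform U) : TypeSpace Rel M -> R :=
  mass (params phi) (defset Rel phi) [::] [::].

Lemma fmass_ge0 phi p : S p -> 0 <= fmass phi p.
Proof.
by move=> Sp; have /andP[] := mass_Sstar_bounds (params phi) (defset Rel phi) [::] [::] Sp.
Qed.

Lemma mass_catC P Q X p : mass (P ++ Q) X [::] [::] p = mass (Q ++ P) X [::] [::] p.
Proof. by apply: mass_perm; apply: Permutation.Permutation_app_comm. Qed.

Lemma fmass_defset phi psi p : onlyx phi -> onlyx psi ->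
  defset Rel phi = defset Rel psi -> fmass phi p = fmass psi p.
Proof.
move=> o1 o2 E; rewrite /fmass.
rewrite -(mass_cat F W hT (params psi) p (defset_pattern_closed hT o1)) // => [|s]; last by right.
by rewrite mass_catC E (mass_cat F W hT _ p (defset_pattern_closed hT o2)) // => s; right.
Qed.

Lemma defset_FOr phi psi : defset Rel (FOr phi psi) = defset Rel phi `|` defset Rel psi.
Proof.
apply/seteqP; split=> c; rewrite /defset /realizes /sat /=; last by case=> H [].
by move=> H; apply: contrapT => nH; apply: H; split=> H'; apply: nH; [left|right].
Qed.

Lemma fmass_FOr phi psi p : onlyx phi -> onlyx psi ->
  defset Rel phi `&` defset Rel psi = set0 ->
  fmass (FOr phi psi) p = fmass phi p + fmass psi p.
Proof.
move=> o1 o2 D; rewrite /fmass defset_FOr /=.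
pose S0 := fun s => List.In s (params phi ++ params psi).
have sub1 : (fun s => List.In s (params phi)) `<=` S0 by move=> s H; apply/In_cat; left.
have sub2 : (fun s => List.In s (params psi)) `<=` S0 by move=> s H; apply/In_cat; right.
rewrite (mass_setU F W hT p (S := S0)) //.
- rewrite (mass_cat F W hT _ p (defset_pattern_closed hT o1)) // => [|s]; last by right.
  by rewrite mass_catC (mass_cat F W hT _ p (defset_pattern_closed hT o2)) // => s; right.
- exact: pattern_closedS sub1 (defset_pattern_closed hT o1).
- exact: pattern_closedS sub2 (defset_pattern_closed hT o2).
- by move=> s; right.
Qed.

Lemma integral_mass_ge0 P X : (0 <= \int[lam]_(p in S) (mass P X [::] [::] p)%:E)%E.
Proof.
by apply: integral_ge0 => p Sp; rewrite lee_fin; case/andP: (mass_Sstar_bounds P X [::] [::] Sp).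
Qed.

Lemma integral_mass_fin_num P X :
  (\int[lam]_(p in S) (mass P X [::] [::] p)%:E)%E \is a fin_num.
Proof.
rewrite ge0_fin_numE ?integral_mass_ge0 //.
apply: (@le_lt_trans _ _ (\int[lam]_(p in S) (cst 1%:E p))%E); last first.
  by rewrite integral_cst ?mul1e ?lambda_Sstar ?ltry //; exact: measurable_Sstar.
apply: ge0_le_integral => //.
- exact: measurable_Sstar.
- by move=> p Sp; rewrite lee_fin; case/andP: (mass_Sstar_bounds P X [::] [::] Sp).
- by apply/measurable_realfun.measurable_EFinP; exact: measurable_mass.
- by move=> p Sp; rewrite /= lee_fin; case/andP: (mass_Sstar_bounds P X [::] [::] Sp).
Qed.

Definition muW (phi : lform U) : R := fine (\int[lam]_(p in S) (fmass phi p)%:E)%E.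

Lemma muWE phi : ((muW phi)%:E = \int[lam]_(p in S) (fmass phi p)%:E)%E.
Proof. by rewrite /muW fineK //; apply: integral_mass_fin_num. Qed.

Lemma muW_keisler : keisler_measure Rel muW.
Proof.
split; [|split; [|split]].
- move=> phi psi o1 o2 E; rewrite /muW; congr fine; apply: eq_integral => p _.
  by rewrite (fmass_defset p o1 o2 E).
- by move=> phi _; apply: fine_ge0; apply: integral_mass_ge0.
- rewrite /muW; have -> : (fun p => (fmass FTop p)%:E) = cst 1%:E.
    by apply/funext => p /=; rewrite /fmass /= asboolT // => c _; rewrite /defset /realizes /sat.
  by rewrite integral_cst ?mul1e ?lambda_Sstar //; exact: measurable_Sstar.
- move=> phi psi o1 o2 D; rewrite /muW -fineD ?integral_mass_fin_num //.
  congr fine; under eq_integral => p _ do rewrite (fmass_FOr p o1 o2 D) EFinD.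
  apply: ge0_integralD; first exact: measurable_Sstar.
  + by move=> p Sp; rewrite lee_fin; exact: fmass_ge0.
  + by apply/measurable_realfun.measurable_EFinP; exact: measurable_mass.
  + by move=> p Sp; rewrite lee_fin; exact: fmass_ge0.
  + by apply/measurable_realfun.measurable_EFinP; exact: measurable_mass.
Qed.

Lemma muW_finite phi (L : seq U) : (forall c, realizes Rel c phi -> List.In c L) ->
  muW phi = 0.
Proof.
move=> HL; rewrite /muW (_ : fmass phi = cst 0) ?integral0 //.
by apply/funext => p; rewrite /fmass (mass_eq0 F W hT (L := L)) // => c _ /HL.
Qed.

Lemma muW_point a : muW (FEq vx (TPar a)) = 0.
Proof. by apply: (muW_finite (L := [:: a])) => c; rewrite /realizes /sat /= => ->; left. Qed.

Lemma muW_invariant : M_invariant Rel M muW.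
Proof.
move=> n phi a b ox hst.
have eab i j : a i = a j <-> b i = b j.
  by have := hst (FEq (TPar (inr i)) (TPar (inr j))) (fun _ => a i); apply => // k [].
have rab i j : Rel (a i) (a j) <-> Rel (b i) (b j).
  by have := hst (FRel (TPar (inr i)) (TPar (inr j))) (fun _ => a i); apply => // k [].
have Mab i : M (a i) -> b i = a i.
  move=> Ma; have := hst (FEq (TPar (inr i)) (TPar (inl (a i)))) (fun _ => a i).
  by move=> H; apply/H => // k [].
have Mba i : M (b i) -> a i = b i.
  move=> Mb; have := hst (FEq (TPar (inr i)) (TPar (inl (b i)))) (fun _ => a i).
  by move=> H; apply/H => // k [].
have tpab i : tpT Rel M (a i) = tpT Rel M (b i) by exact: tp_same_type.
rewrite /muW; congr fine; apply: eq_integral => p _; congr EFin.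
rewrite /fmass !params_fmap.
apply: (mass_transfer hT F W eab rab Mab Mba tpab p (I := [::]) (J := [::]) ox) => //.
by move=> i; left.
Qed.

Section BasicFormulas.
Variables (A B C D : seq U) (E : lform U).
Hypothesis hbd : basic_data M A B C D E.

Let K := A ++ B ++ C ++ D.
Let required e := `[< List.In e A \/ List.In e C >].

Lemma pattern_set_basic c : pattern_set Rel required K c <->
  [/\ (forall a, List.In a A -> Rel c a), (forall b, List.In b B -> ~ Rel c b),
      (forall x, List.In x C -> Rel c x) & (forall d, List.In d D -> ~ Rel c d)].
Proof.
have [_ [_ [dAB [MA [MB [_ [_ [dCD [MC [MD _]]]]]]]]]] := hbd.
have reqA a : List.In a A -> required a by move=> aA; apply/asboolP; left.
have reqC a : List.In a C -> required a by move=> aC; apply/asboolP; right.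
have reqB b : List.In b B -> required b = false.
  by move=> bB; apply/asboolP => -[/dAB/(_ bB)//|/MC/(_ (MB b bB))].
have reqD d : List.In d D -> required d = false.
  by move=> dD; apply/asboolP => -[/MA/(MD d dD)//|/dCD/(_ dD)].
rewrite /pattern_set /K /= !allIn_cat; split.
- move=> [H1 [H2 [H3 H4]]]; split.
  + by move=> a aA; apply/(H1 a aA)/reqA.
  + by move=> b bB /(H2 b bB); rewrite reqB.
  + by move=> x xC; apply/(H3 x xC)/reqC.
  + by move=> d dD /(H4 d dD); rewrite reqD.
- move=> [H1 H2 H3 H4]; split; [|split; [|split]].
  + by move=> a aA; split=> _; [exact: reqA | apply: H1].
  + by move=> b bB; rewrite reqB //; split=> // /(H2 b bB).
  + by move=> x xC; split=> _; [exact: reqC | apply: H3].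
  + by move=> d dD; rewrite reqD //; split=> // /(H4 d dD).
Qed.

Lemma fmass_basic p : ~ trivial_eq Rel E ->
  fmass (basic A B C D E) p = \prod_(e <- K) pattern_factor F W required p e.
Proof.
move=> ntr; have [nA [nB [dAB [MA [MB [nC [nD [dCD [MC [MD [nrE oxE]]]]]]]]]]] := hbd.
rewrite /fmass (mass_agree F W (X' := pattern_set Rel required K) p); last first.
  move=> c _; rewrite params_basic => ncP.
  have ncE : ~ List.In c (params E).
    by move=> H; apply: ncP; apply/In_cat; right; apply/In_cat; left.
  rewrite defset_basic pattern_set_basic.
  split=> [[H1 H2 H3 H4 _]|[H1 H2 H3 H4]] //; split=> //.
  exact: no_rel_realizes_cofinite hT nrE oxE ntr c ncE.
have Kclosed : pattern_closed Rel (fun s => List.In s K) (pattern_set Rel required K).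
  by move=> c c' _ _ pat H e eK; rewrite -(pat e eK); exact: H.
rewrite params_basic (mass_cat F W hT _ p Kclosed) // => [|s]; last by right.
have ndK : List.NoDup K.
  have ndBCD : List.NoDup (B ++ C ++ D).
    apply: NoDup_cat => //; first exact: NoDup_cat.
    by move=> x /MB xM /In_cat [xC|xD]; [exact: MC x xC xM | exact: MD x xD xM].
  apply: NoDup_cat => // x xA /In_cat [xB|/In_cat [xC|xD]].
  - exact: dAB xA xB.
  - exact: MC x xC (MA x xA).
  - exact: MD x xD (MA x xA).
rewrite (mass_pattern_set F W hT p ndK) //.
- by move=> e _ [].
- by move=> e eK; right.
Qed.

Lemma bigprod_pattern_factor_basic p : S p ->
  \prod_(e <- K) pattern_factor F W required p e =
  \1_(clopenT Rel M (bigAnd (map (@Rx U) A ++ map (@nRx U) B))) p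
    * \prod_(c <- C) W (F p) (F (tpT Rel M c))
    * \prod_(d <- D) (1 - W (F p) (F (tpT Rel M d))).
Proof.
move=> Sp; have [_ [_ [dAB [MA [MB [_ [_ [dCD [MC [MD _]]]]]]]]]] := hbd.
rewrite /K !big_cat (clopen_literals_indicator _ MA MB Sp) -!bigprod_indicator -!mulrA.
congr (_ * (_ * (_ * _))); apply: eq_bigprod_In => x xs; rewrite /pattern_factor.
- by rewrite (asboolT (MA x xs)) (_ : required x = true) ?eqb_id //; apply/asboolP; left.
- rewrite (asboolT (MB x xs)) (_ : required x = false) ?eqbF_neg ?asbool_neg //.
  by apply/asboolP => -[/dAB/(_ xs)//|/MC/(_ (MB x xs))].
- by rewrite (asboolF (MC x xs)) (_ : required x = true) //; apply/asboolP; right.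
- rewrite (asboolF (MD x xs)) (_ : required x = false) //.
  by apply/asboolP => -[/MA/(MD x xs)//|/dCD/(_ xs)].
Qed.

End BasicFormulas.

Lemma muW_basicE A B C D E : basic_data M A B C D E ->
  (muW (basic A B C D E))%:E = muW_basic lam F W A B C D E.
Proof.
move=> hbd; rewrite /muW_basic.
have [[L HL]|ntr] := pselect (trivial_eq Rel E).
  rewrite asboolT; last by exists L.
  by rewrite (muW_finite (L := L)) // => c /defset_basic [_ _ _ _ /HL].
rewrite asboolF // muWE; apply: eq_integral => p; rewrite inE => Sp.
by rewrite (fmass_basic hbd) // (bigprod_pattern_factor_basic hbd).
Qed.

End MuW.

Theorem proposition4p17 (R : realType) (U : Type) (Rel : U -> U -> Prop)
  (M : set U)
  (hT : rado_model Rel) (hsat : saturated Rel)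
  (hMc : countable M) (hMU : elementary_sub Rel M)
  (lam : {measure set (TypeSpace Rel M) -> \bar R}) (hlam : is_lambda lam)
  (F : TypeSpace Rel M -> R) (hF : measure_iso lam F)
  (W : R -> R -> R) (hW : borel_graphon W) :
  exists mu : lform U -> R,
    (forall A B C D E, basic_data M A B C D E ->
       (mu (basic A B C D E))%:E = muW_basic lam F W A B C D E) /\
    keisler_measure Rel mu /\
    M_invariant Rel M mu /\
    (forall a : U, mu (FEq vx (TPar a)) = 0).
Proof.
exists (muW lam F W); split; [|split; [|split]].
- by move=> A B C D E; apply: muW_basicE.
- exact: muW_keisler.
- exact: muW_invariant.
- exact: muW_point.
Qed.
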